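(* Let $\psi\in\mathcal K$ have radius of convergence $R_\psi>0$ and let $g$ be the solution of Lagrange's equation $g(z)=z\psi(g(z))$. For $t\in(0,R_\psi)$ put $\psi_t(z)=\psi(tz)/\psi(t)$ and let $g_t$ be the power series solving $g_t(z)=z\psi_t(g_t(z))$. Then for $t\in(0,R_\psi)$, $$g_t(z)=\frac{g(tz/\psi(t))}{t}\qquad\text{for all }|z|\le1.$$ The holomorphic function $g_t$ is continuous on $\partial\mathbb D$ and satisfies $g_t(\mathbb D)\subset\mathbb D$. Moreover, $g_t$ is the probability generating function of $Z_{t/\psi(t)}$ whenever either $\psi\in\mathcal K^\star$ and $t\in[0,\tau]$, or $\psi\in\mathcal K\setminus\mathcal K^\star$ and $t\in(0,R_\psi)$, where $(Z_s)$ is the Khinchin family of $g$.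
   Context: $\mathcal K$ is the class of non-constant power series $f(z)=\sum_{n\ge0}a_nz^n$ with positive radius of convergence $R$, non-negative coefficients and $a_0>0$; its Khinchin family $(X_t)$ is given by $\mathbf P(X_t=n)=a_nt^n/f(t)$ ($n\ge0$, $t\in(0,R)$), $X_0\equiv 0$, with mean $m_f(t)=tf'(t)/f(t)$; thus $\psi_t$ is the probability generating function of the Khinchin family variable $Y_t$ of $\psi$. For $t=0$ one sets $\psi_0\equiv1$ and $g_0(z)=z$. $\mathcal K^\star$ is the subclass with $\lim_{t\uparrow R}m_f(t)>1$, with apex $\tau$ the unique point where $m_\psi(\tau)=1$. The solution $g(z)=\sum_{n\ge1}A_nz^n$ of Lagrange's equation has non-negative coefficients, $A_1=\psi(0)$; for $\psi\in\mathcal K^\star$ its radius of convergence is $\rho=\tau/\psi(\tau)$, it converges on the closed disk $\overline{\mathbb D(0,\rho)}$ and $g(\rho)=\tau$. The Khinchin family $(Z_s)$ of $g$ is $\mathbf P(Z_s=n)=A_ns^n/g(s)$, $n\ge1$ (including $s=\rho$ when $\psi\in\mathcal K^\star$; $Z_0$ is the point mass at $1$). $\mathbb D$ is the open unit disk. *)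

From Stdlib Require Import Reals.
From Coquelicot Require Import Coquelicot.
Open Scope R_scope.

(* a : coefficients of psi(z) = sum a_n z^n *)
Definition in_K (a : nat -> R) : Prop :=
  (forall n, 0 <= a n) /\ 0 < a 0%nat /\
  (exists n, (1 <= n)%nat /\ a n <> 0) /\
  Rbar_lt (Finite 0) (CV_radius a).

Definition mean (a : nat -> R) (t : R) : R :=
  t * Derive (PSeries a) t / PSeries a t.

Definition Rbar_at_left (x : Rbar) : (R -> Prop) -> Prop :=
  match x with
  | Finite r => at_left r
  | _ => Rbar_locally x
  end.

Definition in_Kstar (a : nat -> R) : Prop :=
  exists L : Rbar,
    filterlim (mean a) (Rbar_at_left (CV_radius a)) (Rbar_locally L) /\
    Rbar_lt (Finite 1) L.

Definition conv (u v : nat -> R) (n : nat) : R :=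
  sum_f_R0 (fun k => u k * v (n - k)%nat) n.

Definition delta0 (n : nat) : R := match n with O => 1 | _ => 0 end.

Fixpoint fpow (u : nat -> R) (k : nat) : nat -> R :=
  match k with
  | O => delta0
  | S k' => conv u (fpow u k')
  end.

(* A is the (formal) solution g = sum A_n z^n of Lagrange's equation
   g(z) = z psi(g(z)), psi = sum a_n z^n:
   A_0 = 0 and [z^(n+1)] g = [z^n] sum_k a_k g^k  (terms k > n vanish). *)
Definition lagrange_sol (a A : nat -> R) : Prop :=
  A 0%nat = 0 /\
  forall n, A (S n) = sum_f_R0 (fun k => a k * fpow A k n) n.

Definition psi_t_coef (a : nat -> R) (t : R) (n : nat) : R :=
  a n * t ^ n / PSeries a t.

Definition cterm (c : nat -> R) (z : Complex.C) (n : nat) : Complex.C :=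
  Cmult (RtoC (c n)) (Cpow z n).

Definition csum (c : nat -> R) (z : Complex.C) : Complex.C :=
  (Series (fun n => Re (cterm c z n)), Series (fun n => Im (cterm c z n))).

(* Khinchin family (Z_s) of g = sum A_n z^n : P(Z_s = n) = A_n s^n / g(s),
   Z_0 = point mass at 1 *)
Definition khinchin_g (A : nat -> R) (s : R) (n : nat) : R :=
  if Req_EM_T s 0 then (match n with 1%nat => 1 | _ => 0 end)
  else A n * s ^ n / PSeries A s.

From Stdlib Require Import Reals Lra Lia Wf_nat Classical.
From Coquelicot Require Import Coquelicot.
Open Scope R_scope.

(* Since g(z) = z psi(g(z)), the series g(c z) / t with c = t / psi(t) solves Lagrange's equation
   for psi_t, so by uniqueness of the coefficient recursion g_t has the nonnegative coefficients
   A_n c^n / t. As c psi(t) = t, an induction through the recursion bounds every partial sum of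
   g(c) by t, so these coefficients sum to at most 1: g_t converges absolutely and continuously on
   the closed disk, and |g_t(z)| <= |z| because g_t(0) = 0.

   The pgf claim amounts to g(c) = t. The value G = g(c) <= t satisfies c psi(G) <= G, i.e.
   G / psi(G) >= t / psi(t), whereas x / psi(x) has derivative (1 - m_psi(x)) / psi(x), which is
   positive on (0, t) once m_psi < 1 there. In K* this holds for t <= tau by the intermediate value
   theorem; outside K* because m_psi is strictly increasing (its derivative is a variance) with
   limit at most 1 at R. *)

Lemma sum_f_R0_le_incr (f : nat -> R) m n :
  (forall i, 0 <= f i) -> (m <= n)%nat -> sum_f_R0 f m <= sum_f_R0 f n.
Proof.
  intros Hf Hmn; induction Hmn as [|n _ IH]; [lra|].
  simpl; specialize (Hf (S n)); lra.
Qed.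

Lemma sum_f_R0_term_le (f : nat -> R) k n :
  (forall i, 0 <= f i) -> (k <= n)%nat -> f k <= sum_f_R0 f n.
Proof.
  intros Hf Hk; apply Rle_trans with (sum_f_R0 f k); [|now apply sum_f_R0_le_incr].
  destruct k as [|k]; simpl; [lra|].
  assert (0 <= sum_f_R0 f k) by now apply cond_pos_sum.
  lra.
Qed.

Lemma sum_f_R0_succ_l (f : nat -> R) n :
  sum_f_R0 f (S n) = f 0%nat + sum_f_R0 (fun i => f (S i)) n.
Proof. induction n as [|n IH]; simpl in *; [ring|]. rewrite IH; ring. Qed.

Lemma sum_f_R0_swap (f : nat -> nat -> R) n m :
  sum_f_R0 (fun i => sum_f_R0 (fun j => f i j) m) n =
  sum_f_R0 (fun j => sum_f_R0 (fun i => f i j) n) m.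
Proof. induction n as [|n IH]; simpl; [easy|]. now rewrite IH, <- sum_plus. Qed.

Lemma sum_f_R0_reflect (f : nat -> R) n :
  sum_f_R0 (fun i => f (n - i)%nat) n = sum_f_R0 f n.
Proof.
  revert f; induction n as [|n IH]; intros f; [easy|].
  rewrite sum_f_R0_succ_l; simpl.
  change (f (S n) + sum_f_R0 (fun i => f (n - i)%nat) n = sum_f_R0 f n + f (S n)).
  rewrite IH; ring.
Qed.

Lemma sum_f_R0_vanishing_tail (f : nat -> R) n N : (n <= N)%nat ->
  (forall k, (n < k <= N)%nat -> f k = 0) -> sum_f_R0 f N = sum_f_R0 f n.
Proof.
  intros HnN Hz; induction HnN as [|N HnN IH]; [easy|].
  simpl; rewrite IH by (intros k Hk; apply Hz; lia).
  rewrite (Hz (S N)) by lia; ring.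
Qed.

Lemma sum_f_R0_first (f : nat -> R) n :
  (forall k, (1 <= k)%nat -> f k = 0) -> sum_f_R0 f n = f 0%nat.
Proof.
  intros Hz; apply (sum_f_R0_vanishing_tail f 0 n); [lia|intros; apply Hz; lia].
Qed.

Lemma conv_scale_pow (u v : nat -> R) x n :
  conv u v n * x ^ n = sum_f_R0 (fun j => (u j * x ^ j) * (v (n - j)%nat * x ^ (n - j))) n.
Proof.
  unfold conv; rewrite Rmult_comm, scal_sum; apply sum_eq; intros i Hi.
  replace (x ^ n) with (x ^ i * x ^ (n - i)) by (rewrite <- pow_add; f_equal; lia).
  ring.
Qed.

Lemma fpow_nonneg (u : nat -> R) k n :
  (forall m, (m <= n)%nat -> 0 <= u m) -> 0 <= fpow u k n.
Proof.
  revert n; induction k as [|k IH]; intros n Hu; simpl.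
  - destruct n; simpl; lra.
  - apply Rle_trans with (sum_f_R0 (fun _ => 0) n); [rewrite sum_cte; lra|].
    apply sum_Rle; intros i Hi.
    apply Rmult_le_pos; [apply Hu; lia|apply IH; intros; apply Hu; lia].
Qed.

Lemma fpow_ext (u v : nat -> R) k n :
  (forall m, (m <= n)%nat -> u m = v m) -> fpow u k n = fpow v k n.
Proof.
  revert n; induction k as [|k IH]; intros n Huv; simpl; [easy|].
  apply sum_eq; intros i Hi.
  rewrite Huv, (IH (n - i)%nat) by first [lia | intros; apply Huv; lia]; easy.
Qed.

Lemma fpow_eq0_of_lt (u : nat -> R) k n : u 0%nat = 0 -> (n < k)%nat -> fpow u k n = 0.
Proof.
  revert n; induction k as [|k IH]; intros n Hu0 Hn; [lia|].
  apply sum_eq_R0; intros [|i] Hi; simpl.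
  - rewrite Hu0; ring.
  - rewrite IH by first [easy | lia]; ring.
Qed.

Lemma fpow_scale (u : nat -> R) c s k n : s <> 0 ->
  fpow (fun m => u m * c ^ m / s) k n = fpow u k n * c ^ n / s ^ k.
Proof.
  intros Hs; revert n; induction k as [|k IH]; intros n; simpl.
  - destruct n; simpl; field.
  - unfold conv.
    match goal with
    | |- _ = ?S * ?X / ?Y => replace (S * X / Y) with (X / Y * S) by (unfold Rdiv; ring)
    end.
    rewrite scal_sum; apply sum_eq; intros i Hi; rewrite IH.
    replace (c ^ n) with (c ^ i * c ^ (n - i)) by (rewrite <- pow_add; f_equal; lia).
    field; repeat split; try apply pow_nonzero; easy.
Qed.

Lemma lagrange_sol_unique (a A B : nat -> R) :
  lagrange_sol a A -> lagrange_sol a B -> forall n, A n = B n.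
Proof.
  intros [HA0 HAS] [HB0 HBS] n; induction n as [[|n] IH] using lt_wf_ind.
  - congruence.
  - rewrite HAS, HBS; apply sum_eq; intros k Hk.
    rewrite (fpow_ext A B) by (intros; apply IH; lia); easy.
Qed.

Lemma lagrange_sol_nonneg (a A : nat -> R) :
  (forall n, 0 <= a n) -> lagrange_sol a A -> forall n, 0 <= A n.
Proof.
  intros Ha [HA0 HAS] n; induction n as [[|n] IH] using lt_wf_ind.
  - lra.
  - rewrite HAS; apply cond_pos_sum; intros k.
    apply Rmult_le_pos; [easy|]; apply fpow_nonneg; intros; apply IH; lia.
Qed.

Lemma lagrange_sol_succ (a A : nat -> R) n N : lagrange_sol a A -> (n <= N)%nat ->
  A (S n) = sum_f_R0 (fun k => a k * fpow A k n) N.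
Proof.
  intros [HA0 HAS] HnN; rewrite HAS; symmetry.
  apply sum_f_R0_vanishing_tail; [easy|]; intros k Hk.
  rewrite fpow_eq0_of_lt by first [easy | lia]; ring.
Qed.

(* g(z) = z psi(g(z)) gives g(s z / p) / s = z psi(s (g(s z / p) / s)) / p *)
Lemma lagrange_sol_scale (a A : nat -> R) s p : s <> 0 -> p <> 0 -> lagrange_sol a A ->
  lagrange_sol (fun n => a n * s ^ n / p) (fun n => A n * (s / p) ^ n / s).
Proof.
  intros Hs Hp [HA0 HAS]; split.
  - rewrite HA0; lra.
  - intros n.
    rewrite (sum_eq _ (fun k => a k * fpow A k n * ((s / p) ^ n / p))).
    + rewrite <- scal_sum, HAS; simpl; field; auto.
    + intros k _; rewrite fpow_scale by easy.
      field; repeat split; try apply pow_nonzero; easy.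
Qed.

Lemma Rbar_lt_of_le (x y : R) (r : Rbar) : x <= y -> Rbar_lt y r -> Rbar_lt x r.
Proof. intros Hxy Hy; eapply Rbar_le_lt_trans; [|exact Hy]; easy. Qed.

Lemma Rbar_lt_Rabs (x y : R) (r : Rbar) : 0 <= x <= y -> Rbar_lt y r -> Rbar_lt (Rabs x) r.
Proof. intros Hxy Hy; rewrite Rabs_pos_eq by lra; apply (Rbar_lt_of_le x y); [lra|easy]. Qed.

Lemma is_series_sum_f_R0 (f : nat -> R) (l : R) :
  is_series f l -> is_lim_seq (sum_f_R0 f) l.
Proof. intros H; apply (is_lim_seq_ext (sum_n f)); [intros; apply sum_n_Reals|exact H]. Qed.

Lemma is_series_partial_le (f : nat -> R) (l : R) N :
  is_series f l -> (forall n, 0 <= f n) -> sum_f_R0 f N <= l.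
Proof.
  intros H Hf; apply (is_lim_seq_incr_compare (sum_f_R0 f)); [now apply is_series_sum_f_R0|].
  intros n; simpl; specialize (Hf (S n)); lra.
Qed.

Lemma is_series_le_of_partial (f : nat -> R) (l B : R) :
  is_series f l -> (forall N, sum_f_R0 f N <= B) -> l <= B.
Proof.
  intros H HB; exact (is_lim_seq_le _ _ _ _ HB (is_series_sum_f_R0 f l H) (is_lim_seq_const B)).
Qed.

Lemma is_series_le (u v : nat -> R) (lu lv : R) :
  is_series u lu -> is_series v lv -> (forall n, u n <= v n) -> lu <= lv.
Proof.
  intros Hu Hv Huv.
  exact (is_lim_seq_le (sum_f_R0 u) (sum_f_R0 v) lu lv (fun N => sum_growing u v N Huv)
           (is_series_sum_f_R0 u lu Hu) (is_series_sum_f_R0 v lv Hv)).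
Qed.

Lemma ex_series_bounded (f : nat -> R) B : (forall n, 0 <= f n) ->
  (forall N, sum_f_R0 f N <= B) -> ex_series f /\ Series f <= B.
Proof.
  intros Hf HB.
  assert (Hex : ex_series f).
  { apply ex_series_Reals_1, growing_cv.
    - intros n; simpl; specialize (Hf (S n)); lra.
    - exists B; intros x [N ->]; easy. }
  split; [easy|]; exact (is_series_le_of_partial f _ B (Series_correct _ Hex) HB).
Qed.

Lemma is_series_finite_support (f : nat -> R) N :
  (forall n, (N < n)%nat -> f n = 0) -> is_series f (sum_f_R0 f N).
Proof.
  intros Hf; apply is_series_Reals; intros eps Heps; exists N; intros n Hn.
  rewrite (sum_f_R0_vanishing_tail f N n Hn) by (intros; apply Hf; lia).
  unfold Rdist; rewrite Rminus_diag, Rabs_R0; easy.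
Qed.

Lemma Series_nonneg (f : nat -> R) : (forall n, 0 <= f n) -> ex_series f -> 0 <= Series f.
Proof.
  intros Hf Hex; apply Rle_trans with (f 0%nat); [easy|].
  exact (is_series_partial_le f _ 0 (Series_correct _ Hex) Hf).
Qed.

Lemma PSeries_Series (a : nat -> R) x : PSeries a x = Series (fun n => a n * x ^ n).
Proof.
  rewrite PSeries_eq; apply Series_ext; intros n.
  rewrite pow_n_pow; unfold scal; simpl; unfold mult; simpl; ring.
Qed.

Lemma is_series_PSeries (a : nat -> R) x : Rbar_lt (Rabs x) (CV_radius a) ->
  is_series (fun n => a n * x ^ n) (PSeries a x).
Proof. intros H; now apply is_pseries_R, PSeries_correct, CV_radius_inside. Qed.

Section NonnegCoefficients.

Variable a : nat -> R.
Hypothesis a_nonneg : forall n, 0 <= a n.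

Lemma is_series_PSeries_nonneg x : 0 <= x -> Rbar_lt x (CV_radius a) ->
  is_series (fun n => a n * x ^ n) (PSeries a x).
Proof. intros Hx HR; apply is_series_PSeries; now rewrite Rabs_pos_eq. Qed.

Lemma PSeries_partial_le x N : 0 <= x -> Rbar_lt x (CV_radius a) ->
  sum_f_R0 (fun n => a n * x ^ n) N <= PSeries a x.
Proof.
  intros Hx HR; apply is_series_partial_le; [now apply is_series_PSeries_nonneg|].
  intros n; apply Rmult_le_pos; [easy|now apply pow_le].
Qed.

Lemma PSeries_pos x : 0 < a 0%nat -> 0 <= x -> Rbar_lt x (CV_radius a) -> 0 < PSeries a x.
Proof.
  intros Ha0 Hx HR; eapply Rlt_le_trans; [|apply (PSeries_partial_le x 0 Hx HR)]; simpl; lra.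
Qed.

Lemma PSeries_le_mono x y : 0 <= x -> x <= y -> Rbar_lt y (CV_radius a) ->
  PSeries a x <= PSeries a y.
Proof.
  intros Hx Hxy HR.
  apply (is_series_le _ _ _ _ (is_series_PSeries_nonneg x Hx (Rbar_lt_of_le x y _ Hxy HR))
                              (is_series_PSeries_nonneg y ltac:(lra) HR)).
  intros n; apply Rmult_le_compat_l; [easy|now apply pow_incr].
Qed.

End NonnegCoefficients.

Lemma sum_fpow_le_pow (u : nat -> R) x k N : (forall n, 0 <= u n) -> 0 <= x ->
  sum_f_R0 (fun n => fpow u k n * x ^ n) N <= sum_f_R0 (fun n => u n * x ^ n) N ^ k.
Proof.
  intros Hu Hx; induction k as [|k IH].
  - simpl; rewrite (sum_f_R0_first _ N) by (intros [|n] Hn; simpl; [lia|ring]); simpl; lra.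
  - set (P := sum_f_R0 (fun n => u n * x ^ n) N).
    assert (HP : 0 <= P)
      by (apply cond_pos_sum; intros; apply Rmult_le_pos; [easy|now apply pow_le]).
    assert (Hterm : forall m, 0 <= fpow u k m * x ^ m)
      by (intros; apply Rmult_le_pos; [apply fpow_nonneg; intros; easy|now apply pow_le]).
    apply Rle_trans with (P * sum_f_R0 (fun n => fpow u k n * x ^ n) N);
      [|simpl; apply Rmult_le_compat_l; easy].
    simpl fpow; rewrite (sum_eq _ _ N (fun n _ => conv_scale_pow u (fpow u k) x n)).
    destruct N as [|N]; [unfold P; simpl; lra|].
    unfold P; rewrite cauchy_finite by lia.
    match goal with |- _ <= _ + ?Rest => assert (0 <= Rest) end.
    { apply cond_pos_sum; intros n; apply cond_pos_sum; intros l.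
      apply Rmult_le_pos; [apply Rmult_le_pos; [easy|now apply pow_le]|easy]. }
    lra.
Qed.

Section LagrangeValue.

Variables a A : nat -> R.
Hypothesis a_nonneg : forall n, 0 <= a n.
Hypothesis A_sol : lagrange_sol a A.

Let A_nonneg := lagrange_sol_nonneg a A a_nonneg A_sol.

Lemma lagrange_sol_partial_le k n :
  sum_f_R0 (fun j => a j * fpow A j n) k <= A (S n).
Proof.
  rewrite (lagrange_sol_succ a A n (max k n)) by (easy || lia).
  apply sum_f_R0_le_incr; [|lia].
  intros j; apply Rmult_le_pos; [easy|apply fpow_nonneg; intros; apply A_nonneg].
Qed.

(* By induction on N: the partial sum of order N + 1 is at most c psi(partial sum of order N). *)
Lemma lagrange_partial_le c t : 0 <= c -> 0 <= t -> Rbar_lt t (CV_radius a) ->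
  c * PSeries a t <= t -> forall N, sum_f_R0 (fun n => A n * c ^ n) N <= t.
Proof.
  intros Hc Ht HR Hct N; pose proof A_sol as [HA0 _].
  induction N as [|N IH]; [simpl; rewrite HA0; lra|].
  rewrite sum_f_R0_succ_l, HA0, Rmult_0_l, Rplus_0_l.
  set (P := sum_f_R0 (fun n => A n * c ^ n) N) in IH.
  assert (HP : 0 <= P).
  { apply cond_pos_sum; intros; apply Rmult_le_pos; [apply A_nonneg|now apply pow_le]. }
  assert (Hexpand : sum_f_R0 (fun n => A (S n) * c ^ S n) N =
                    c * sum_f_R0 (fun k => a k * sum_f_R0 (fun n => fpow A k n * c ^ n) N) N).
  { rewrite (sum_eq _ (fun n => sum_f_R0 (fun k => a k * (fpow A k n * c ^ n)) N * c)).
    - rewrite <- scal_sum, sum_f_R0_swap; f_equal.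
      apply sum_eq; intros k _; rewrite scal_sum; apply sum_eq; intros; ring.
    - intros n Hn; rewrite (lagrange_sol_succ a A n N A_sol Hn); simpl.
      rewrite Rmult_comm, scal_sum; symmetry; rewrite Rmult_comm, scal_sum.
      apply sum_eq; intros; ring. }
  rewrite Hexpand; apply Rle_trans with (c * PSeries a t); [|easy].
  apply Rmult_le_compat_l; [easy|].
  apply Rle_trans with (sum_f_R0 (fun k => a k * P ^ k) N).
  - apply sum_Rle; intros k _; apply Rmult_le_compat_l; [easy|].
    apply sum_fpow_le_pow; [apply A_nonneg|easy].
  - apply Rle_trans with (PSeries a P).
    + apply PSeries_partial_le; [easy|easy|now apply (Rbar_lt_of_le P t)].
    + now apply PSeries_le_mono.
Qed.

Section AtPoint.

Variable c : R.
Hypothesis c_nonneg : 0 <= c.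
Hypothesis g_c_ex : ex_series (fun n => A n * c ^ n).

Let G := Series (fun n => A n * c ^ n).

Lemma is_series_fpow_value k : is_series (fun n => fpow A k n * c ^ n) (G ^ k).
Proof.
  induction k as [|k IH].
  - replace (G ^ 0) with (sum_f_R0 (fun n => fpow A 0 n * c ^ n) 0) by (simpl; ring).
    apply is_series_finite_support; intros [|n] Hn; simpl; [lia|ring].
  - simpl pow; apply (is_series_ext (fun n => sum_f_R0
             (fun j => (A j * c ^ j) * (fpow A k (n - j)%nat * c ^ (n - j))) n)).
    + intros n; now rewrite <- conv_scale_pow.
    + apply (is_series_mult_pos (fun n => A n * c ^ n) (fun n => fpow A k n * c ^ n));
        [now apply Series_correct|easy| |];
        intros n; (apply Rmult_le_pos; [|now apply pow_le]);
        [apply A_nonneg|apply fpow_nonneg; intros; apply A_nonneg].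
Qed.

Lemma is_series_truncated_psi K :
  is_series (fun n => sum_f_R0 (fun k => a k * (fpow A k n * c ^ n)) K)
            (sum_f_R0 (fun k => a k * G ^ k) K).
Proof.
  induction K as [|K IH].
  - exact (is_series_scal_l _ _ _ (is_series_fpow_value 0)).
  - exact (is_series_plus _ _ _ _ IH (is_series_scal_l _ _ _ (is_series_fpow_value (S K)))).
Qed.

(* the fixed-point equation G = c psi(G), of which only this half is needed *)
Lemma lagrange_value_psi_le : 0 <= G -> Rbar_lt G (CV_radius a) -> c * PSeries a G <= G.
Proof.
  intros HG HGR.
  apply (is_series_le_of_partial (fun k => c * (a k * G ^ k))).
  { exact (is_series_scal_l c _ _ (is_series_PSeries_nonneg a G HG HGR)). }
  intros K; rewrite (sum_eq _ (fun k => a k * G ^ k * c)) by (intros; ring).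
  rewrite <- scal_sum.
  assert (HG_shift : is_series (fun n => c * (A (S n) * c ^ n)) G).
  { apply (is_series_ext (fun n => A (S n) * c ^ S n)); [intros; simpl; ring|].
    pose proof A_sol as [HA0 _].
    apply (is_series_incr_1 (fun n => A n * c ^ n)).
    match goal with
    | |- is_series _ ?L => replace L with G by (rewrite HA0; unfold plus; simpl; ring)
    end.
    now apply Series_correct. }
  apply (is_series_le _ _ _ _ (is_series_scal_l c _ _ (is_series_truncated_psi K)) HG_shift).
  intros n; apply Rmult_le_compat_l; [easy|].
  rewrite (sum_eq _ (fun k => a k * fpow A k n * c ^ n)) by (intros; ring).
  rewrite <- scal_sum, (Rmult_comm (A (S n))).
  apply Rmult_le_compat_l; [now apply pow_le|apply lagrange_sol_partial_le].
Qed.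

End AtPoint.

End LagrangeValue.

Definition PS_theta (u : nat -> R) : nat -> R := PS_incr_1 (PS_derive u).

Lemma PS_theta_eq (u : nat -> R) n : PS_theta u n = INR n * u n.
Proof.
  unfold PS_theta, PS_incr_1, PS_derive; destruct n; simpl; [unfold zero; simpl; ring|easy].
Qed.

Lemma CV_radius_PS_theta (u : nat -> R) : CV_radius (PS_theta u) = CV_radius u.
Proof. unfold PS_theta; now rewrite CV_radius_incr_1, CV_radius_derive. Qed.

Lemma PSeries_PS_theta (u : nat -> R) y : PSeries (PS_theta u) y = y * PSeries (PS_derive u) y.
Proof. apply PSeries_incr_1. Qed.

Definition mean_series (a : nat -> R) (y : R) : R := PSeries (PS_theta a) y / PSeries a y.

Lemma mean_eq_series (a : nat -> R) y : Rbar_lt (Rabs y) (CV_radius a) ->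
  mean a y = mean_series a y.
Proof.
  intros H; unfold mean, mean_series; now rewrite Derive_PSeries, PSeries_PS_theta.
Qed.

Definition variance_coef (a : nat -> R) (n : nat) : R :=
  conv a (PS_theta (PS_theta a)) n - conv (PS_theta a) (PS_theta a) n.

(* symmetrising the sum in j <-> n - j *)
Lemma variance_coef_twice (a : nat -> R) n :
  2 * variance_coef a n = sum_f_R0 (fun j => a j * a (n - j)%nat * (INR (n - j) - INR j) ^ 2) n.
Proof.
  set (f := fun j => a j * a (n - j)%nat * (INR (n - j) * INR (n - j) - INR j * INR (n - j))).
  assert (Hf : variance_coef a n = sum_f_R0 f n).
  { unfold variance_coef, conv; rewrite <- minus_sum; apply sum_eq; intros j _; unfold f.
    rewrite !PS_theta_eq; ring. }
  rewrite Hf; replace (2 * sum_f_R0 f n) with (sum_f_R0 f n + sum_f_R0 (fun j => f (n - j)%nat) n)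
    by (rewrite sum_f_R0_reflect; ring).
  rewrite <- sum_plus; apply sum_eq; intros j Hj; unfold f.
  replace (n - (n - j))%nat with j by lia; ring.
Qed.

Section MeanSeries.

Variable a : nat -> R.
Hypothesis a_nonneg : forall n, 0 <= a n.
Hypothesis a0_pos : 0 < a 0%nat.

Lemma variance_coef_nonneg n : 0 <= variance_coef a n.
Proof.
  apply (Rmult_le_reg_l 2); [lra|]; rewrite variance_coef_twice, Rmult_0_r.
  apply cond_pos_sum; intros j; apply Rmult_le_pos; [now apply Rmult_le_pos|apply pow2_ge_0].
Qed.

Lemma variance_coef_pos k : (1 <= k)%nat -> a k <> 0 -> 0 < variance_coef a k.
Proof.
  intros Hk Hak; apply (Rmult_lt_reg_l 2); [lra|]; rewrite variance_coef_twice, Rmult_0_r.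
  eapply Rlt_le_trans; [|apply (sum_f_R0_term_le _ 0); [|lia]].
  - simpl; rewrite Nat.sub_0_r; apply Rmult_lt_0_compat.
    + apply Rmult_lt_0_compat; [easy|destruct (a_nonneg k); [easy|congruence]].
    + assert (0 < INR k) by (apply lt_0_INR; lia); nra.
  - intros j; apply Rmult_le_pos; [now apply Rmult_le_pos|apply pow2_ge_0].
Qed.

Lemma is_series_variance y : 0 < y -> Rbar_lt y (CV_radius a) ->
  is_series (fun n => variance_coef a n * y ^ n)
    (PSeries a y * PSeries (PS_theta (PS_theta a)) y
     - PSeries (PS_theta a) y * PSeries (PS_theta a) y).
Proof.
  intros Hy HR.
  assert (Htheta : forall u, (forall n, 0 <= u n) -> forall n, 0 <= PS_theta u n)
    by (intros u Hu n; rewrite PS_theta_eq; apply Rmult_le_pos; [apply pos_INR|easy]).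
  assert (Hterm : forall u, (forall n, 0 <= u n) -> forall n, 0 <= u n * y ^ n)
    by (intros u Hu n; apply Rmult_le_pos; [easy|apply pow_le; lra]).
  assert (S0 := is_series_PSeries_nonneg a y (Rlt_le _ _ Hy) HR).
  assert (S1 := is_series_PSeries_nonneg (PS_theta a) y (Rlt_le _ _ Hy)
                  ltac:(now rewrite CV_radius_PS_theta)).
  assert (S2 := is_series_PSeries_nonneg (PS_theta (PS_theta a)) y (Rlt_le _ _ Hy)
                  ltac:(now rewrite !CV_radius_PS_theta)).
  assert (Ha1 := Htheta a a_nonneg); assert (Ha2 := Htheta _ Ha1).
  refine (is_series_ext _ _ _ _ (is_series_minus _ _ _ _
    (is_series_mult_pos _ _ _ _ S0 S2 (Hterm a a_nonneg) (Hterm _ Ha2))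
    (is_series_mult_pos _ _ _ _ S1 S1 (Hterm _ Ha1) (Hterm _ Ha1)))).
  intros n; unfold variance_coef; rewrite Rmult_minus_distr_r, !conv_scale_pow; easy.
Qed.

Lemma is_derive_mean_series y : 0 <= y -> Rbar_lt y (CV_radius a) ->
  is_derive (mean_series a) y
    ((PSeries (PS_derive (PS_theta a)) y * PSeries a y
      - PSeries (PS_theta a) y * PSeries (PS_derive a) y) / PSeries a y ^ 2).
Proof.
  intros Hy HR; assert (HyR : Rbar_lt (Rabs y) (CV_radius a)) by now rewrite Rabs_pos_eq.
  apply is_derive_div.
  - apply is_derive_PSeries; now rewrite CV_radius_PS_theta.
  - now apply is_derive_PSeries.
  - now apply Rgt_not_eq, PSeries_pos.
Qed.

Lemma mean_series_continuous y : 0 <= y -> Rbar_lt y (CV_radius a) ->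
  continuity_pt (mean_series a) y.
Proof.
  intros Hy HR; apply continuity_pt_filterlim, (ex_derive_continuous (mean_series a)).
  eexists; now apply is_derive_mean_series.
Qed.

Hypothesis a_nonconst : exists k, (1 <= k)%nat /\ a k <> 0.

Lemma PSeries_variance_pos y : 0 < y -> Rbar_lt y (CV_radius a) ->
  0 < PSeries a y * PSeries (PS_theta (PS_theta a)) y
      - PSeries (PS_theta a) y * PSeries (PS_theta a) y.
Proof.
  intros Hy HR; destruct a_nonconst as [k [Hk Hak]].
  assert (Hterm : forall n, 0 <= variance_coef a n * y ^ n)
    by (intros n; apply Rmult_le_pos; [apply variance_coef_nonneg|apply pow_le; lra]).
  eapply Rlt_le_trans; [|apply (is_series_partial_le _ _ k (is_series_variance y Hy HR) Hterm)].
  eapply Rlt_le_trans; [|apply (sum_f_R0_term_le _ k k Hterm); lia].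
  apply Rmult_lt_0_compat; [now apply variance_coef_pos|now apply pow_lt].
Qed.

Lemma mean_series_increasing x y : 0 < x -> x < y -> Rbar_lt y (CV_radius a) ->
  mean_series a x < mean_series a y.
Proof.
  apply (incr_function _ 0 (CV_radius a) (fun z =>
    (PSeries (PS_derive (PS_theta a)) z * PSeries a z
     - PSeries (PS_theta a) z * PSeries (PS_derive a) z) / PSeries a z ^ 2));
    intros z Hz HzR; simpl in Hz.
  - apply is_derive_mean_series; [lra|easy].
  - assert (Hpos := PSeries_variance_pos z Hz HzR).
    apply Rdiv_lt_0_compat; [|apply pow_lt, PSeries_pos; easy || lra].
    apply (Rmult_lt_reg_l z); [easy|].
    rewrite !PSeries_PS_theta in *; lra.
Qed.

End MeanSeries.

Lemma mean_series_0 (a : nat -> R) : mean_series a 0 = 0.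
Proof. unfold mean_series; rewrite PSeries_PS_theta; unfold Rdiv; ring. Qed.

(* By the intermediate value theorem, since m_psi(0) = 0. *)
Lemma mean_lt_one_below_apex (a : nat -> R) (t : R) :
  (forall n, 0 <= a n) -> 0 < a 0%nat -> Rbar_lt t (CV_radius a) ->
  (forall tau, 0 < tau -> Rbar_lt tau (CV_radius a) -> mean a tau = 1 -> t <= tau) ->
  forall x, 0 < x < t -> mean a x < 1.
Proof.
  intros Ha Ha0 HtR Hapex x Hx.
  assert (HR : forall y, 0 <= y <= x -> Rbar_lt (Rabs y) (CV_radius a))
    by (intros y Hy; apply (Rbar_lt_Rabs y t); [lra|easy]).
  destruct (Rlt_le_dec (mean a x) 1) as [|Hge]; [easy|exfalso].
  assert (Hroot : exists tau, 0 < tau <= x /\ mean a tau = 1).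
  { destruct (Rle_lt_or_eq_dec _ _ Hge) as [Hgt|Heq]; [|exists x; split; [lra|easy]].
    destruct (Ranalysis5.IVT_interv (fun y => mean_series a y - 1) 0 x) as [tau [Htau Hroot]].
    - intros y Hy; apply continuity_pt_minus; [|apply continuity_pt_const; now intros ? ?].
      apply mean_series_continuous; [easy|easy|lra|].
      apply (Rbar_lt_of_le y t); [lra|easy].
    - lra.
    - rewrite mean_series_0; lra.
    - rewrite <- mean_eq_series by (apply HR; lra); lra.
    - exists tau; rewrite mean_eq_series by (apply HR; lra).
      destruct (Req_dec tau 0) as [->|Hne]; [rewrite mean_series_0 in Hroot|]; lra. }
  destruct Hroot as [tau [Htau Hmean]].
  assert (t <= tau) by (apply Hapex; [lra| |easy]; apply (Rbar_lt_of_le tau t); [lra|easy]).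
  lra.
Qed.

Lemma Rbar_at_left_above (r : Rbar) (y0 : R) (P : R -> Prop) : Rbar_lt y0 r ->
  (forall y, y0 < y -> Rbar_lt y r -> P y) -> Rbar_at_left r P.
Proof.
  intros Hy0 HP; destruct r as [r| |]; simpl in *; [|exists y0; intros; now apply HP|easy].
  assert (Hd : 0 < r - y0) by lra.
  exists (mkposreal _ Hd); intros u Hu Hur; apply HP; [|easy].
  apply Rabs_def2 in Hu; simpl in Hu; unfold minus, plus, opp in Hu; simpl in Hu; lra.
Qed.

(* The limit is the supremum of f on [t0, r). *)
Lemma increasing_has_lim_at_left (f : R -> R) (r : Rbar) (t0 : R) : Rbar_lt t0 r ->
  (forall x y, t0 <= x -> x < y -> Rbar_lt y r -> f x < f y) ->
  exists L, filterlim f (Rbar_at_left r) (Rbar_locally L) /\ Rbar_le (f t0) L.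
Proof.
  intros Ht0 Hincr.
  set (E v := exists y, t0 <= y /\ Rbar_lt y r /\ v = f y).
  destruct (Lub_Rbar_correct E) as [Hub Hleast]; set (L := Lub_Rbar E) in *.
  assert (HfL : forall y, t0 <= y -> Rbar_lt y r -> Rbar_le (f y) L)
    by (intros y Hy HyR; apply Hub; now exists y).
  assert (Hnear : forall (m : R) (Q : R -> Prop), Rbar_lt m L ->
            (forall v, m < v -> Rbar_le v L -> Q v) -> Rbar_at_left r (fun y => Q (f y))).
  { intros m Q Hm HQ.
    destruct (classic (exists y0, t0 <= y0 /\ Rbar_lt y0 r /\ m < f y0))
      as [[y0 [Hy0 [Hy0r Hmy0]]]|Hnone].
    - apply (Rbar_at_left_above r y0); [easy|]; intros y Hy HyR.
      assert (f y0 < f y) by (apply Hincr; easy).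
      apply HQ; [lra|apply HfL; [lra|easy]].
    - exfalso; apply (Rbar_lt_not_le _ _ Hm), Hleast.
      intros v [y [Hy [HyR ->]]]; simpl; apply Rnot_lt_le; intros Hlt.
      apply Hnone; now exists y. }
  exists L; split; [|apply HfL; [lra|easy]].
  intros P HP; unfold filtermap.
  destruct L as [l| |] eqn:HL.
  - destruct HP as [eps Heps].
    apply (Hnear (l - eps)); [simpl; destruct eps; simpl; lra|].
    intros v Hlo Hhi; apply Heps; simpl in Hhi.
    apply Rabs_def1; unfold minus, plus, opp; simpl; lra.
  - destruct HP as [M HM].
    exact (Hnear M P I (fun v Hv _ => HM v Hv)).
  - exfalso; exact (HfL t0 (Rle_refl _) Ht0).
Qed.

Lemma Series_le_split (b T : nat -> R) (d : R) N :
  (forall n, 0 <= b n <= 2 * T n) -> (forall n, b n <= INR n * d * T n) ->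
  ex_series T -> 0 <= d ->
  Series b <= INR N * d * Series T + 2 * Series (fun k => T (S N + k)%nat).
Proof.
  intros Hb2 Hbd HT Hd.
  assert (HT_nonneg : forall n, 0 <= T n) by (intros n; specialize (Hb2 n); lra).
  assert (H2T : ex_series (fun n => 2 * T n)) by now apply (ex_series_scal_l 2 T).
  assert (Hb : ex_series b).
  { apply (@ex_series_le R_AbsRing R_CompleteNormedModule _ (fun n => 2 * T n)); [|easy].
    intros n; unfold norm; simpl; unfold abs; simpl; rewrite Rabs_pos_eq; apply Hb2. }
  rewrite (Series_incr_n b (S N)) by (easy || lia); simpl pred.
  apply Rplus_le_compat.
  - apply Rle_trans with (sum_f_R0 (fun n => T n * (INR N * d)) N).
    + apply sum_Rle; intros n Hn; rewrite Hbd.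
      assert (INR n <= INR N) by now apply le_INR.
      assert (0 <= T n * d) by now apply Rmult_le_pos.
      nra.
    + rewrite <- scal_sum; apply Rmult_le_compat_l; [apply Rmult_le_pos; [apply pos_INR|easy]|].
      apply is_series_partial_le; [now apply Series_correct|easy].
  - rewrite <- Series_scal_l; apply Series_le; [intros; apply Hb2|].
    now apply (ex_series_incr_n (fun n => 2 * T n) (S N)).
Qed.

Lemma Series_tail_lt (T : nat -> R) : (forall n, 0 <= T n) -> ex_series T ->
  forall eps, 0 < eps -> exists N, Series (fun k => T (S N + k)%nat) < eps.
Proof.
  intros HT Hex eps Heps.
  assert (Hlim := is_series_sum_f_R0 _ _ (Series_correct _ Hex)).
  apply is_lim_seq_spec in Hlim; destruct (Hlim (mkposreal eps Heps)) as [N HN].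
  exists N; specialize (HN N (Nat.le_refl _)); simpl in HN.
  rewrite (Series_incr_n T (S N)) in HN by (easy || lia); simpl pred in HN.
  assert (0 <= Series (fun k => T (S N + k)%nat)).
  { apply Series_nonneg; [easy|]; now apply (ex_series_incr_n T (S N)). }
  rewrite Rabs_minus_sym, Rabs_pos_eq in HN; lra.
Qed.

Lemma im_le_Cmod (z : Complex.C) : Rabs (Im z) <= Cmod z.
Proof.
  assert (H := Cmod2_alt z); assert (H2 : Rabs (Im z) ^ 2 = Im z ^ 2) by apply pow2_abs.
  assert (Hz := Cmod_ge_0 z); assert (Him := Rabs_pos (Im z)).
  assert (0 <= Re z ^ 2) by apply pow2_ge_0.
  nra.
Qed.

Lemma is_series_Re_Im (f : nat -> Complex.C) (l : Complex.C) : is_series f l ->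
  is_series (fun n => Re (f n)) (Re l) /\ is_series (fun n => Im (f n)) (Im l).
Proof.
  intros H; unfold is_series in *.
  assert (Hsum : forall N, sum_n (fun n => Re (f n)) N = Re (sum_n f N) /\
                           sum_n (fun n => Im (f n)) N = Im (sum_n f N)).
  { induction N as [|N [IHre IHim]]; [now rewrite !sum_O|].
    rewrite !sum_Sn, IHre, IHim; easy. }
  assert (Hball : forall eps : posreal, eventually (fun N => ball_norm l eps (sum_n f N)))
    by (apply (filterlim_locally_ball_norm (K := C_AbsRing)); exact H).
  split; apply filterlim_locally_ball_norm; intros eps; generalize (Hball eps);
    apply filter_imp; intros N HN; unfold ball_norm in *; simpl in *.
  - change (Rabs (sum_n (fun n => Re (f n)) N - Re l) < eps).
    rewrite (proj1 (Hsum N)); eapply Rle_lt_trans; [|exact HN].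
    exact (re_le_Cmod (Cminus (sum_n f N) l)).
  - change (Rabs (sum_n (fun n => Im (f n)) N - Im l) < eps).
    rewrite (proj2 (Hsum N)); eapply Rle_lt_trans; [|exact HN].
    exact (im_le_Cmod (Cminus (sum_n f N) l)).
Qed.

Lemma Cmod_cterm (p : nat -> R) z n : Cmod (cterm p z n) = Rabs (p n) * Cmod z ^ n.
Proof. unfold cterm; now rewrite Cmod_mult, Cmod_R, Cmod_pow. Qed.

Lemma is_series_csum (p : nat -> R) z : ex_series (fun n => Cmod (cterm p z n)) ->
  is_series (cterm p z) (csum p z).
Proof.
  intros Habs.
  destruct (@ex_series_le C_AbsRing C_CompleteNormedModule _ _ (fun n => Rle_refl _) Habs)
    as [l Hl].
  destruct (is_series_Re_Im _ _ Hl) as [Hre Him].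
  unfold csum; rewrite (is_series_unique _ _ Hre), (is_series_unique _ _ Him).
  now destruct l.
Qed.

Lemma Cmod_series_le (f : nat -> Complex.C) (l : Complex.C) (b : nat -> R) :
  is_series f l -> (forall n, Cmod (f n) <= b n) -> ex_series b -> Cmod l <= Series b.
Proof.
  intros Hl Hb Hex.
  assert (Hlim : is_lim_seq (fun N => Cmod (sum_n f N)) (Cmod l))
    by exact (filterlim_comp _ _ _ (sum_n f) norm eventually (locally l) (locally (norm l))
                Hl (filterlim_norm l)).
  assert (Hpartial : forall N, Cmod (sum_n f N) <= Series b).
  { intros N; apply Rle_trans with (sum_f_R0 b N).
    - induction N as [|N IH]; [rewrite sum_O; apply Hb|].
      rewrite sum_Sn; simpl; eapply Rle_trans; [apply Cmod_triangle|].
      specialize (Hb (S N)); lra.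
    - apply is_series_partial_le; [now apply Series_correct|].
      intros n; eapply Rle_trans; [apply Cmod_ge_0|apply Hb]. }
  exact (is_lim_seq_le _ _ _ _ Hpartial Hlim (is_lim_seq_const _)).
Qed.

Lemma Cmod_pow_le_1 (z : Complex.C) n : Cmod z <= 1 -> Cmod z ^ n <= 1.
Proof. intros Hz; rewrite <- (pow1 n); apply pow_incr; split; [apply Cmod_ge_0|easy]. Qed.

Lemma Cmod_Cpow_sub_le z w n : Cmod z <= 1 -> Cmod w <= 1 ->
  Cmod (Cminus (Cpow z n) (Cpow w n)) <= INR n * Cmod (Cminus z w).
Proof.
  intros Hz Hw; induction n as [|n IH].
  - simpl; replace (Cminus 1 1) with (RtoC 0) by ring; rewrite Cmod_0; lra.
  - replace (Cminus (Cpow z (S n)) (Cpow w (S n))) with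
      (Cplus (Cmult z (Cminus (Cpow z n) (Cpow w n))) (Cmult (Cminus z w) (Cpow w n)))
      by (simpl; ring).
    eapply Rle_trans; [apply Cmod_triangle|]; rewrite !Cmod_mult, Cmod_pow, S_INR.
    assert (Cmod w ^ n <= 1) by now apply Cmod_pow_le_1.
    assert (H1 := Cmod_ge_0 z); assert (H2 := Cmod_ge_0 (Cminus z w)).
    assert (H3 := Cmod_ge_0 (Cminus (Cpow z n) (Cpow w n))).
    assert (H4 := pow_le (Cmod w) n (Cmod_ge_0 _)).
    nra.
Qed.

Section ClosedDisk.

Variable p : nat -> R.
Hypothesis p_nonneg : forall n, 0 <= p n.
Hypothesis p_summable : ex_series p.

Lemma Cmod_cterm_le z n : Cmod z <= 1 -> Cmod (cterm p z n) <= p n.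
Proof.
  intros Hz; rewrite Cmod_cterm, Rabs_pos_eq by easy.
  rewrite <- (Rmult_1_r (p n)) at 2; apply Rmult_le_compat_l; [easy|now apply Cmod_pow_le_1].
Qed.

Lemma is_series_csum_disk z : Cmod z <= 1 -> is_series (cterm p z) (csum p z).
Proof.
  intros Hz; apply is_series_csum.
  apply (@ex_series_le R_AbsRing R_CompleteNormedModule _ p); [|easy]; intros n.
  unfold norm; simpl; unfold abs; simpl.
  rewrite Rabs_pos_eq by apply Cmod_ge_0; now apply Cmod_cterm_le.
Qed.

Lemma Cmod_csum_le z : p 0%nat = 0 -> Cmod z <= 1 -> Cmod (csum p z) <= Cmod z * Series p.
Proof.
  intros Hp0 Hz; rewrite <- Series_scal_l.
  apply (Cmod_series_le _ _ _ (is_series_csum_disk z Hz)); [|now apply (ex_series_scal_l _ p)].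
  intros [|n]; rewrite Cmod_cterm, Rabs_pos_eq by easy.
  - rewrite Hp0; simpl; lra.
  - assert (Cmod z ^ n <= 1) by now apply Cmod_pow_le_1.
    assert (0 <= p (S n) * Cmod z) by (apply Rmult_le_pos; [easy|apply Cmod_ge_0]); simpl; nra.
Qed.

Lemma Cmod_csum_sub_le z w N : Cmod z <= 1 -> Cmod w <= 1 ->
  Cmod (Cminus (csum p z) (csum p w))
    <= INR N * Cmod (Cminus z w) * Series p + 2 * Series (fun k => p (S N + k)%nat).
Proof.
  intros Hz Hw.
  assert (Hsub : is_series (fun n => Cminus (cterm p z n) (cterm p w n))
                           (Cminus (csum p z) (csum p w)))
    by exact (is_series_minus _ _ _ _ (is_series_csum_disk z Hz) (is_series_csum_disk w Hw)).
  set (b n := p n * Cmod (Cminus (Cpow z n) (Cpow w n))).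
  assert (Hb : forall n, Cmod (Cminus (cterm p z n) (cterm p w n)) = b n).
  { intros n; unfold b, cterm.
    replace (Cminus _ _) with (Cmult (RtoC (p n)) (Cminus (Cpow z n) (Cpow w n))) by ring.
    now rewrite Cmod_mult, Cmod_R, Rabs_pos_eq. }
  assert (Hb2 : forall n, 0 <= b n <= 2 * p n).
  { intros n; rewrite <- Hb; split; [apply Cmod_ge_0|].
    unfold Rminus; eapply Rle_trans; [apply Cmod_triangle|]; rewrite Cmod_opp.
    assert (H1 := Cmod_cterm_le z n Hz); assert (H2 := Cmod_cterm_le w n Hw); lra. }
  eapply Rle_trans; [apply (Cmod_series_le _ _ b Hsub)|].
  - intros n; now rewrite Hb.
  - apply (@ex_series_le R_AbsRing R_CompleteNormedModule _ (fun n => 2 * p n));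
      [|now apply (ex_series_scal_l 2 p)].
    intros n; unfold norm; simpl; unfold abs; simpl; rewrite Rabs_pos_eq; apply Hb2.
  - apply Series_le_split; [easy| |easy|apply Cmod_ge_0].
    intros n; unfold b.
    replace (INR n * Cmod (Cminus z w) * p n) with (p n * (INR n * Cmod (Cminus z w))) by ring.
    apply Rmult_le_compat_l; [easy|now apply Cmod_Cpow_sub_le].
Qed.

Lemma csum_continuous_disk z0 : Cmod z0 <= 1 ->
  filterlim (csum p) (within (fun z => Cmod z <= 1) (locally z0)) (locally (csum p z0)).
Proof.
  intros Hz0.
  refine (proj2 (filterlim_locally_ball_norm (K := C_AbsRing) (U := C_NormedModule)
                   (csum p) (csum p z0)) _).
  intros [eps Heps].
  destruct (Series_tail_lt p p_nonneg p_summable (eps / 4)) as [N HN]; [lra|].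
  set (B := INR N * Series p).
  assert (HB : 0 <= B) by (apply Rmult_le_pos; [apply pos_INR|now apply Series_nonneg]).
  assert (Hdel : 0 < eps / (2 * (B + 1))) by (apply Rdiv_lt_0_compat; lra).
  apply (locally_le_locally_norm (K := C_AbsRing) (V := C_NormedModule) z0).
  exists (mkposreal _ Hdel); intros z Hz HzD.
  change (Cmod (Cminus z z0) < eps / (2 * (B + 1))) in Hz.
  change (Cmod (Cminus (csum p z) (csum p z0)) < eps).
  eapply Rle_lt_trans; [apply (Cmod_csum_sub_le z z0 N HzD Hz0)|].
  assert (Hd : B * Cmod (Cminus z z0) <= eps / 2).
  { apply Rle_trans with ((B + 1) * (eps / (2 * (B + 1)))); [|right; field; lra].
    assert (H := Cmod_ge_0 (Cminus z z0)); nra. }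
  unfold B in Hd; lra.
Qed.

End ClosedDisk.

Lemma mean_lt_one_of_not_Kstar (a : nat -> R) (t : R) : in_K a -> ~ in_Kstar a ->
  Rbar_lt t (CV_radius a) -> forall x, 0 < x < t -> mean a x < 1.
Proof.
  intros [Ha [Ha0 [Hk _]]] HnK HtR x Hx.
  assert (Hincr : forall y1 y2, 0 < y1 -> y1 < y2 -> Rbar_lt y2 (CV_radius a) ->
                    mean a y1 < mean a y2).
  { intros y1 y2 H1 H12 H2.
    rewrite !mean_eq_series by (apply (Rbar_lt_Rabs _ y2); [lra|easy]).
    now apply mean_series_increasing. }
  apply Rnot_le_lt; intros Hge; apply HnK.
  destruct (increasing_has_lim_at_left (mean a) (CV_radius a) t HtR
              (fun y1 y2 H1 => Hincr y1 y2 ltac:(lra))) as [L [HL Hle]].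
  exists L; split; [easy|].
  eapply Rbar_lt_le_trans; [|exact Hle]; simpl.
  assert (mean a x < mean a t) by (apply Hincr; [lra|lra|easy]); lra.
Qed.

Section ScaledSolution.

Variables a A At : nat -> R.
Variable t : R.
Hypothesis a_nonneg : forall n, 0 <= a n.
Hypothesis a0_pos : 0 < a 0%nat.
Hypothesis A_sol : lagrange_sol a A.
Hypothesis t_pos : 0 < t.
Hypothesis t_lt_radius : Rbar_lt t (CV_radius a).
Hypothesis At_sol : lagrange_sol (psi_t_coef a t) At.

Let psi_t_pos : 0 < PSeries a t := PSeries_pos a a_nonneg t a0_pos (Rlt_le _ _ t_pos) t_lt_radius.
Let c := t / PSeries a t.
Let c_pos : 0 < c := Rdiv_lt_0_compat _ _ t_pos psi_t_pos.

Lemma scaled_sol_eq n : At n = A n * c ^ n / t.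
Proof.
  symmetry; apply (lagrange_sol_unique (psi_t_coef a t) (fun n => A n * c ^ n / t) At);
    [apply lagrange_sol_scale; [lra|apply Rgt_not_eq, psi_t_pos|easy]|easy].
Qed.

Lemma lagrange_value_bounds : ex_series (fun n => A n * c ^ n) /\
  0 < Series (fun n => A n * c ^ n) <= t.
Proof.
  assert (Hterm : forall n, 0 <= A n * c ^ n).
  { intros n; apply Rmult_le_pos; [now apply (lagrange_sol_nonneg a)|apply pow_le; lra]. }
  assert (Hct : c * PSeries a t <= t) by (unfold c; right; field; lra).
  destruct (ex_series_bounded _ t Hterm
              (lagrange_partial_le a A a_nonneg A_sol c t (Rlt_le _ _ c_pos) (Rlt_le _ _ t_pos)
                 t_lt_radius Hct)) as [Hex Hle].
  split; [easy|split; [|easy]].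
  apply Rlt_le_trans with (sum_f_R0 (fun n => A n * c ^ n) 1);
    [|apply is_series_partial_le; [now apply Series_correct|easy]].
  destruct A_sol as [HA0 HAS]; simpl; rewrite HA0, (HAS 0%nat); simpl.
  assert (0 < a 0%nat * 1 * (c * 1)) by (apply Rmult_lt_0_compat; lra); lra.
Qed.

Lemma scaled_sol_nonneg n : 0 <= At n.
Proof.
  rewrite scaled_sol_eq; apply Rmult_le_pos; [|apply Rlt_le, Rinv_0_lt_compat; lra].
  apply Rmult_le_pos; [now apply (lagrange_sol_nonneg a)|apply pow_le; lra].
Qed.

Lemma scaled_sol_summable : ex_series At /\ Series At <= 1.
Proof.
  apply ex_series_bounded; [apply scaled_sol_nonneg|]; intros N.
  destruct lagrange_value_bounds as [Hex [_ Hle]].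
  rewrite (sum_eq _ (fun n => A n * c ^ n * / t)) by (intros; apply scaled_sol_eq).
  rewrite <- scal_sum; apply (Rmult_le_reg_l t); [easy|].
  field_simplify; [|lra].
  eapply Rle_trans; [|exact Hle].
  apply is_series_partial_le; [now apply Series_correct|].
  intros n; apply Rmult_le_pos; [now apply (lagrange_sol_nonneg a)|apply pow_le; lra].
Qed.

Lemma lagrange_value_eq : (forall x, 0 < x < t -> mean a x < 1) ->
  Series (fun n => A n * c ^ n) = t.
Proof.
  intros Hmean; destruct lagrange_value_bounds as [Hex [HG0 HGt]].
  set (G := Series (fun n => A n * c ^ n)) in *.
  destruct (Rle_lt_or_eq_dec _ _ HGt) as [Hlt|]; [exfalso|easy].
  assert (HR : forall x, G <= x <= t -> Rbar_lt (Rabs x) (CV_radius a))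
    by (intros x Hx; apply (Rbar_lt_Rabs x t); [lra|easy]).
  assert (Hpsi : forall x, G <= x <= t -> 0 < PSeries a x)
    by (intros x Hx; apply PSeries_pos; [easy|easy|lra|apply (Rbar_lt_of_le x t); [lra|easy]]).
  assert (HcG : c * PSeries a G <= G).
  { apply (lagrange_value_psi_le a A a_nonneg A_sol c);
      [apply Rlt_le, c_pos|easy|exact (Rlt_le _ _ HG0)|].
    apply (Rbar_lt_of_le G t); [lra|easy]. }
  set (h x := x / PSeries a x).
  set (h' x := (1 * PSeries a x - x * PSeries (PS_derive a) x) / PSeries a x ^ 2).
  destruct (MVT_cor2 h h' G t Hlt) as [x [Hmvt Hx]].
  { intros x Hx; apply is_derive_Reals, (is_derive_div (fun y => y) (PSeries a)).
    - apply (is_derive_id x).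
    - apply is_derive_PSeries, HR; lra.
    - apply Rgt_not_eq, Hpsi; lra. }
  assert (Hh : h t <= h G).
  { unfold h; fold c; apply (Rmult_le_reg_r (PSeries a G)); [apply Hpsi; lra|].
    unfold Rdiv; rewrite Rmult_assoc, Rinv_l by (apply Rgt_not_eq, Hpsi; lra); lra. }
  assert (Hh' : 0 < h' x).
  { specialize (Hmean x ltac:(lra)); unfold mean in Hmean.
    rewrite Derive_PSeries in Hmean by (apply HR; lra).
    assert (Hpx := Hpsi x ltac:(lra)).
    apply Rdiv_lt_0_compat; [|now apply pow_lt].
    apply (Rmult_lt_compat_r (PSeries a x)) in Hmean; [|easy].
    unfold Rdiv in Hmean; rewrite Rmult_assoc, Rinv_l in Hmean; lra. }
  assert (0 < h' x * (t - G)) by (apply Rmult_lt_0_compat; lra).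
  lra.
Qed.

Lemma khinchin_g_scaled : (forall x, 0 < x < t -> mean a x < 1) ->
  forall n, khinchin_g A c n = At n.
Proof.
  intros Hmean n; unfold khinchin_g.
  destruct (Req_EM_T c 0) as [Hc0|_]; [lra|].
  now rewrite PSeries_Series, lagrange_value_eq, scaled_sol_eq.
Qed.

Lemma scaled_series_identity z : Cmod z <= 1 ->
  is_series (cterm A (Cmult (RtoC c) z)) (Cmult (RtoC t) (csum At z)).
Proof.
  intros Hz; destruct scaled_sol_summable as [Hex _].
  apply (is_series_ext (fun n => Cmult (RtoC t) (cterm At z n))).
  - intros n; unfold cterm; rewrite Cpow_mult_l, <- RtoC_pow, scaled_sol_eq, !Cmult_assoc,
      <- !RtoC_mult.
    do 2 f_equal; field; lra.
  - exact (is_series_scal_l (K := C_AbsRing) (RtoC t) _ _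
             (is_series_csum_disk At scaled_sol_nonneg Hex z Hz)).
Qed.

Lemma scaled_csum_in_disk z : Cmod z < 1 -> Cmod (csum At z) < 1.
Proof.
  intros Hz; destruct scaled_sol_summable as [Hex Hle].
  eapply Rle_lt_trans; [apply Cmod_csum_le; [apply scaled_sol_nonneg|easy|apply At_sol|lra]|].
  assert (H := Cmod_ge_0 z); nra.
Qed.

Lemma scaled_sol_pgf : (forall x, 0 < x < t -> mean a x < 1) ->
  forall z, Cmod z <= 1 -> is_series (cterm (khinchin_g A c) z) (csum At z).
Proof.
  intros Hmean z Hz; destruct scaled_sol_summable as [Hex _].
  apply (is_series_ext (cterm At z)); [intros n; unfold cterm; now rewrite khinchin_g_scaled|].
  apply is_series_csum_disk; [apply scaled_sol_nonneg|easy|easy].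
Qed.

End ScaledSolution.

(* psi_0 = 1, so g_0(z) = z: the point mass at 1 *)
Lemma psi_0_sol_pgf (a A At : nat -> R) : 0 < a 0%nat -> lagrange_sol (psi_t_coef a 0) At ->
  forall z, is_series (cterm (khinchin_g A (0 / PSeries a 0)) z) (csum At z).
Proof.
  intros Ha0 [HAt0 HAtS] z.
  assert (HAt : forall n, At n = khinchin_g A (0 / PSeries a 0) n).
  { intros n; unfold khinchin_g; rewrite Rdiv_0_l; destruct (Req_EM_T 0 0) as [_|]; [|easy].
    destruct n as [|n]; [easy|]; rewrite HAtS, sum_f_R0_first.
    - unfold psi_t_coef; rewrite PSeries_0; simpl.
      destruct n as [|n]; simpl; field; lra.
    - intros k Hk; unfold psi_t_coef; rewrite pow_i by lia; unfold Rdiv; ring. }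
  apply (is_series_ext (cterm At z)); [intros n; unfold cterm; now rewrite HAt|].
  apply is_series_csum.
  exists (sum_f_R0 (fun n => Cmod (cterm At z n)) 1).
  apply is_series_finite_support; intros [|[|n]] Hn; [lia|lia|].
  rewrite Cmod_cterm, HAt; unfold khinchin_g; rewrite Rdiv_0_l.
  destruct (Req_EM_T 0 0); [|easy]; rewrite Rabs_R0; ring.
Qed.

Theorem proposition6p3 :
  forall (a A : nat -> R),
    in_K a ->
    lagrange_sol a A ->
    forall (t : R) (At : nat -> R),
      0 <= t -> Rbar_lt (Finite t) (CV_radius a) ->
      lagrange_sol (psi_t_coef a t) At ->
      (0 < t ->
        (* g_t(z) = g(t z / psi(t)) / t on the closed unit disk *)
        (forall z : Complex.C, Cmod z <= 1 ->
           exists l : Complex.C,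
             is_series (cterm At z) l /\
             is_series (cterm A (Cmult (RtoC (t / PSeries a t)) z))
                       (Cmult (RtoC t) l)) /\
        (* g_t continuous on the closed unit disk (up to the boundary) *)
        (forall z0 : Complex.C, Cmod z0 <= 1 ->
           filterlim (csum At) (within (fun z => Cmod z <= 1) (locally z0))
                     (locally (csum At z0))) /\
        (* g_t(D) subset D *)
        (forall z : Complex.C, Cmod z < 1 -> Cmod (csum At z) < 1)) /\
      (* g_t is the pgf of Z_{t/psi(t)} *)
      (((in_Kstar a /\
         forall tau : R, 0 < tau -> Rbar_lt (Finite tau) (CV_radius a) ->
           mean a tau = 1 -> t <= tau)
        \/ (~ in_Kstar a /\ 0 < t)) ->
       forall z : Complex.C, Cmod z <= 1 ->
         is_series (cterm (khinchin_g A (t / PSeries a t)) z) (csum At z)).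
Proof.
  intros a A HK HA t At Ht0 HtR HAt.
  pose proof HK as [Ha [Ha0 _]].
  split.
  - intros Ht; destruct (scaled_sol_summable a A At t Ha Ha0 HA Ht HtR HAt) as [Hex _].
    split; [|split].
    + intros z Hz; exists (csum At z); split.
      * apply is_series_csum_disk; [apply (scaled_sol_nonneg a A At t)|..]; easy.
      * now apply scaled_series_identity.
    + apply csum_continuous_disk; [apply (scaled_sol_nonneg a A At t)|]; easy.
    + now apply (scaled_csum_in_disk a A At t).
  - intros Hcase z Hz.
    destruct (Rle_lt_or_eq_dec _ _ Ht0) as [Ht|<-]; [|now apply psi_0_sol_pgf].
    apply (scaled_sol_pgf a A At t); try easy.
    destruct Hcase as [[_ Hapex]|[HnK _]].
    + now apply mean_lt_one_below_apex.
    + now apply (mean_lt_one_of_not_Kstar a t).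
Qed.
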